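(* Let $p$ be a prime, $G$ a finite group, and let $\chi\in\mathrm{Irr}(G)$ be such that $\chi(x)$ is a root of unity for every $p$-singular element $x\in G$. Then: (a) If $S$ is a Sylow $p$-subgroup of $G$, then $\chi(1)^2\equiv 1 \pmod{|S|}$. Hence, if $p$ is odd, then $\chi(1)\equiv\pm1\pmod{|S|}$; if $|S|=2^a$ with $a\ge 2$, then $\chi(1)\equiv \pm1 \pmod{2^a}$ or $\chi(1)\equiv 2^{a-1}\pm 1\pmod{2^a}$. In any case, $\chi(1)$ is not divisible by $p$. (b) If $M\trianglelefteq G$ has order divisible by $p$, then the restriction $\chi_M$ is a sum of distinct irreducible characters of $M$ (each with multiplicity one). In particular, if $\chi$ is non-linear and faithful, then $\mathbf{Z}(G)$ is a $p'$-group. (c) If $M$ is a subgroup of $G$ having a normal $p$-complement $N$ and a non-trivial Sylow $p$-subgroup $P$, then $$[\chi_M,\chi_M]=1+\frac{[\chi_N,\chi_N]-1}{|P|}.$$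
   Context: $\mathrm{Irr}(G)$ denotes the set of irreducible complex characters of $G$. An element is $p$-singular if its order is divisible by $p$. $\chi_M$ denotes restriction of $\chi$ to $M$, and $[\alpha,\beta]=\frac{1}{|H|}\sum_{h\in H}\alpha(h)\overline{\beta(h)}$ is the usual inner product of class functions on a group $H$. $\mathbf{Z}(G)$ is the center of $G$; a $p'$-group is a group of order prime to $p$. A normal $p$-complement of $M$ is a normal subgroup of $M$ of order prime to $p$ and index a power of $p$. *)

From mathcomp Require Import all_boot all_order all_algebra all_fingroup all_solvable all_field all_character.
Set Implicit Arguments. Unset Strict Implicit. Unset Printing Implicit Defensive.
Import GRing.Theory Num.Theory.

(* The degree chi(1) of a character, as a natural number (chi(1) is a natural
   number for every character, so truncn is exact). *)
Definition cfdeg (gT : finGroupType) (G : {group gT}) (chi : 'CF(G)) : nat :=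
  Num.truncn (chi 1%g).

From mathcomp Require Import all_boot all_order all_algebra all_fingroup all_solvable all_field all_character.
From mathcomp Require Import zify ring.
Set Implicit Arguments. Unset Strict Implicit. Unset Printing Implicit Defensive.
Import GRing.Theory Num.Theory.

(* On p-singular elements the hypothesis gives |chi x| = 1.  If every element
   of H outside a subgroup K is p-singular, splitting the sum that defines the
   norm of chi_H gives |H| [chi_H, chi_H] = |K| [chi_K, chi_K] + |H| - |K|.
   For K = 1 and H a Sylow p-subgroup this says chi(1)^2 = 1 mod |H|, which is
   (a); for H = M and K = N it is (c).  For (b), Clifford's theorem writes
   chi(y) = e s(y) with e the common multiplicity of the constituents of chi_M
   and s(y) an algebraic integer; taking y in M of order p, |e s(y)| = 1
   forces e = 1 since |s(y)|^2 is then a rational algebraic integer.  A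
   central y of order p has |chi y| = chi(1). *)

Lemma sqr_eq1_modn_dvd (d c : nat) :
  0 < c -> c ^ 2 = 1 %[mod d] -> d %| (c - 1) * (c + 1).
Proof.
move=> c_gt0 /eqP; rewrite eqn_mod_dvd ?expn_gt0 ?c_gt0 //.
by have -> : (c - 1) * (c + 1) = c ^ 2 - 1 by nia.
Qed.

Lemma pfactor_dvdn_mul_cases (p a m n : nat) : prime p ->
  ~~ ((p %| m) && (p %| n)) -> p ^ a %| m * n -> p ^ a %| m \/ p ^ a %| n.
Proof.
move=> p_pr; rewrite negb_and => /orP[p'm | p'n].
  by rewrite Gauss_dvdr ?coprimeXl ?prime_coprime //; right.
by rewrite Gauss_dvdl ?coprimeXl ?prime_coprime //; left.
Qed.

Lemma sqr_eq1_mod_odd_pfactor (p a c : nat) : prime p -> odd p -> 0 < c ->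
  c ^ 2 = 1 %[mod p ^ a] -> c = 1 %[mod p ^ a] \/ c + 1 = 0 %[mod p ^ a].
Proof.
move=> p_pr p_odd c_gt0 /(sqr_eq1_modn_dvd c_gt0).
case/(pfactor_dvdn_mul_cases p_pr) => [| dv | dv]; last 2 first.
- by left; apply/eqP; rewrite eqn_mod_dvd.
- by right; apply/eqP; rewrite mod0n.
apply/andP=> [[p_cm1 p_cp1]].
have : p %| (c + 1) - (c - 1) by rewrite dvdn_sub.
have -> : c + 1 - (c - 1) = 2 by lia.
by rewrite dvdn_prime2 // => /eqP p2; rewrite p2 in p_odd.
Qed.

Lemma expn2S_dvdn_mod (b x : nat) :
  2 ^ b.+1 %| x -> x = 0 %[mod 2 ^ b.+2] \/ x = 2 ^ b.+1 %[mod 2 ^ b.+2].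
Proof.
case/dvdnP=> k ->; rewrite -[k]odd_double_half mulnDl -muln2 -mulnA -expnS addnC.
by case: (odd k); [right | left]; rewrite modnMDl ?mul1n.
Qed.

Lemma sqr_eq1_mod_pow2 (b c : nat) : c ^ 2 = 1 %[mod 2 ^ b.+2] ->
  [\/ c = 1 %[mod 2 ^ b.+2], c + 1 = 0 %[mod 2 ^ b.+2],
      c = 2 ^ b.+1 + 1 %[mod 2 ^ b.+2] | c + 1 = 2 ^ b.+1 %[mod 2 ^ b.+2]].
Proof.
move=> sq_c; have c_odd : odd c.
  have := congr1 (fun m => m %% 2) sq_c; rewrite /= !modn_dvdm ?dvdn_exp //.
  by rewrite !modn2 oddX; case: (odd c).
rewrite -[c]odd_double_half c_odd add1n in sq_c *; set u := c./2 in sq_c *.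
have : 2 ^ b %| u * u.+1.
  have /(sqr_eq1_modn_dvd (ltn0Sn _)) := sq_c.
  have -> : u.*2.+1 - 1 = 2 * u by rewrite subn1 -mul2n.
  have -> : u.*2.+1 + 1 = 2 * u.+1 by rewrite addn1 -mul2n mulnS.
  by rewrite mulnACA -[2 * 2]/(2 ^ 2) -[b.+2]/(2 + b) expnD dvdn_pmul2l.
have u_coprime : ~~ ((2 %| u) && (2 %| u.+1)) by rewrite !dvdn2 /=; case: (odd u).
case/(pfactor_dvdn_mul_cases (isT : prime 2) u_coprime) => dv.
  have /expn2S_dvdn_mod[] : 2 ^ b.+1 %| u.*2 by rewrite -mul2n expnS dvdn_pmul2l.
    by move=> u0; constructor 1; rewrite -addn1 -modnDml u0 mod0n.
  by move=> u1; constructor 3; rewrite -addn1 -modnDml u1 modnDml.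
rewrite addn1 -doubleS.
have /expn2S_dvdn_mod[] : 2 ^ b.+1 %| u.+1.*2 by rewrite -mul2n expnS dvdn_pmul2l.
  by constructor 2.
by constructor 4.
Qed.

Lemma coprime_sqr_eq1_mod (c m : nat) : c ^ 2 = 1 %[mod m] -> coprime c m.
Proof.
by move=> sq_c; rewrite -(@coprime_pexpl 2) // -coprime_modl sq_c coprime_modl coprime1n.
Qed.

Local Open Scope group_scope.
Local Open Scope ring_scope.

Lemma norm_expr_eq1 (R : numDomainType) (x : R) (n : nat) :
  (0 < n)%N -> x ^+ n = 1 -> `|x| = 1.
Proof. by move=> n_gt0 xn1; apply/eqP; rewrite -(pexpr_eq1 n_gt0) // -normrX xn1 normr1. Qed.

Lemma p_elt_dvdn_order (p : nat) (gT : finGroupType) (x : gT) :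
  p.-elt x -> x != 1%g -> (p %| #[x])%N.
Proof. by move=> p_x ntx; case: (pgroup_pdiv p_x); rewrite // cycle_eq1. Qed.

Lemma Cnat_norm_mul_Aint_eq1 (e a : algC) :
  e \in Num.nat -> a \in Aint -> `|e * a| = 1 -> e = 1.
Proof.
move=> Ne Aa eaN1; pose k := a * a^*.
have e2k : e ^+ 2 * k = 1.
  by rewrite /k -normCK -{1}(ger0_norm (natr_ge0 Ne)) -exprMn -normrM eaN1 expr1n.
have e_neq0 : e != 0 by apply: contra_eq_neq e2k => ->; rewrite expr0n mul0r eq_sym oner_eq0.
have Ik : k \in Num.int.
  apply: Cint_rat_Aint; last by rewrite rpredM ?Aint_aut.
  have -> : k = (e ^+ 2)^-1.
    by apply: (mulfI (expf_neq0 2 e_neq0)); rewrite e2k mulfV ?expf_neq0.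
  by rewrite rpredV rpredX // -(truncnK Ne) rpred_nat.
have Nk : k \in Num.nat by rewrite natrEint Ik /k -normCK exprn_ge0.
have : (Num.truncn e ^ 2 * Num.truncn k)%N%:R = 1 :> algC.
  by rewrite natrM natrX !truncnK.
move/eqP; rewrite pnatr_eq1 muln_eq1 expnS expn1 muln_eq1 => /andP[/andP[/eqP e1 _] _].
by rewrite -(truncnK Ne) e1.
Qed.

Section CharacterNormOne.

Variable gT : finGroupType.
Implicit Types G H K M N S : {group gT}.

Lemma cfdeg_char G (chi : 'CF(G)) : chi \is a character -> chi 1%g = (cfdeg chi)%:R.
Proof. by move=> Nchi; rewrite /cfdeg truncnK ?Cnat_char1. Qed.

Lemma cfdeg_irr_gt0 G (i : Iirr G) : (0 < cfdeg 'chi_i)%N.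
Proof. by rewrite -(ltr0n algC) -cfdeg_char ?irr_char ?irr1_gt0. Qed.

Lemma cfnorm_Res_setD G H K (phi : 'CF(G)) :
  H \subset G -> K \subset H -> {in H :\: K, forall x, `|phi x| = 1} ->
  #|H|%:R * '['Res[H] phi] = #|K|%:R * '['Res[K] phi] + (#|H| - #|K|)%N%:R.
Proof.
move=> sHG sKH phiN1; have sKG := subset_trans sKH sHG.
rewrite !(cfnormE (cfun_onG _)) !mulrA !mulfV ?pnatr_eq0 -?lt0n ?cardG_gt0 // !mul1r.
rewrite (big_setID K) /= (setIidPr sKH); congr (_ + _).
  by apply: eq_bigr => x Kx; rewrite !cfResE // (subsetP sKH).
rewrite (eq_bigr (fun _ => 1)) => [|x HKx]; first by rewrite sumr_const cardsD (setIidPr sKH).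
by rewrite cfResE ?phiN1 ?expr1n //; case/setDP: HKx.
Qed.

Lemma cfdeg_sqr_mod_card G S (chi : 'CF(G)) :
  chi \is a character -> S \subset G -> {in S^#, forall x, `|chi x| = 1} ->
  (cfdeg chi ^ 2 = 1 %[mod #|S|])%N.
Proof.
move=> Nchi sSG chiN1.
have := cfnorm_Res_setD sSG (sub1G S) chiN1.
have chi1N : '['Res[[1 gT]%G] chi] = (cfdeg chi ^ 2)%:R.
  rewrite (cfnormE (cfun_onG _)) cards1 invr1 mul1r big_set1.
  by rewrite cfResE ?sub1G // cfdeg_char // normr_nat natrX.
rewrite chi1N cards1 mul1r -natrD.
rewrite -(truncnK (Cnat_cfdot_char (cfRes_char S Nchi) (cfRes_char S Nchi))).
rewrite -natrM => /eqP; rewrite eqr_nat => /eqP normSE.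
apply/eqP; rewrite -(eqn_modDr (#|S| - 1)) -normSE subnKC ?cardG_gt0 //.
by rewrite modnMr modnn.
Qed.

Lemma cfdot_Res_irr_constt_eq1 G M (i : Iirr G) (j : Iirr M) y :
  M <| G -> y \in M -> `|'chi_i y| = 1 ->
  j \in irr_constt ('Res[M] 'chi_i) -> '['Res[M] 'chi_i, 'chi_j] = 1.
Proof.
move=> nMG My chiyN1 Rj; set e := '['Res[M] 'chi_i, 'chi_j].
have Ne : e \in Num.nat by rewrite Cnat_cfdot_char ?cfRes_char ?irr_char.
pose s := \sum_(psi <- ('chi_j ^: G)%CF) psi.
have As : s y \in Aint.
  by rewrite /s reindex_cfclass // sum_cfunE rpred_sum // => k _; apply: Aint_irr.
apply: Cnat_norm_mul_Aint_eq1 Ne As _.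
by rewrite -chiyN1 -(cfResE _ (normal_sub nMG) My) (Clifford_Res_sum_cfclass nMG Rj) cfunE.
Qed.

Lemma cfRes_irr_multfree G M (i : Iirr G) y :
  M <| G -> y \in M -> `|'chi_i y| = 1 ->
  'Res[M] 'chi_i = \sum_(j in irr_constt ('Res[M] 'chi_i)) 'chi_j.
Proof.
move=> nMG My chiyN1; rewrite {1}['Res[M] _]cfun_sum_constt.
by apply: eq_bigr => j Rj; rewrite (cfdot_Res_irr_constt_eq1 nMG My) ?scale1r.
Qed.

Lemma lin_char_center_norm1 G (i : Iirr G) y :
  y \in 'Z(G) -> `|'chi_i y| = 1 -> 'chi_i \is a linear_char.
Proof.
move=> Zy chiyN1; have Gy := subsetP (center_sub G) y Zy.
have : y \in 'Z('chi_i)%CF by rewrite -cap_cfcenter_irr in Zy; apply: (bigcapP Zy).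
by rewrite irr_cfcenterE // chiyN1 qualifE/= irr_char eq_sym.
Qed.

Lemma cfnorm_Res_index G M N (phi : 'CF(G)) :
  M \subset G -> N \subset M -> {in M :\: N, forall x, `|phi x| = 1} ->
  '['Res[M] phi] = 1 + ('['Res[N] phi] - 1) / #|M : N|%:R.
Proof.
move=> sMG sNM phiN1; have := cfnorm_Res_setD sMG sNM phiN1.
rewrite -(Lagrange sNM) natrB ?leq_pmulr ?indexg_gt0 // natrM.
have N_neq0 : #|N|%:R != 0 :> algC by rewrite pnatr_eq0 -lt0n cardG_gt0.
have iMN_neq0 : #|M : N|%:R != 0 :> algC by rewrite pnatr_eq0 -lt0n indexg_gt0.
move=> normME; apply: (mulfI (mulf_neq0 N_neq0 iMN_neq0)).
by rewrite normME; field.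
Qed.

End CharacterNormOne.

Section PsingularNormOne.

Variables (p : nat) (gT : finGroupType) (G : {group gT}) (i : Iirr G).
Hypothesis p_pr : prime p.
Hypothesis chi_psing_norm1 : forall x, x \in G -> (p %| #[x])%N -> `|'chi_i x| = 1.

Let chi_order_p_norm1 (M : {group gT}) x :
  M \subset G -> x \in M -> #[x] = p -> `|'chi_i x| = 1.
Proof. by move=> sMG Mx ox; rewrite chi_psing_norm1 ?(subsetP sMG) ?ox. Qed.

Lemma cfdeg_sqr_mod_Sylow (S : {group gT}) :
  p.-Sylow(G) S -> (cfdeg 'chi_i ^ 2 = 1 %[mod #|S|])%N.
Proof.
move=> sylS; have sSG := pHall_sub sylS; have pS := pHall_pgroup sylS.
apply: (cfdeg_sqr_mod_card (irr_char i) sSG) => x /setD1P[ntx Sx].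
by rewrite chi_psing_norm1 ?(subsetP sSG) ?p_elt_dvdn_order ?(mem_p_elt pS).
Qed.

Lemma p_ndvd_cfdeg : ~~ (p %| cfdeg 'chi_i)%N.
Proof.
have [S sylS] := Sylow_exists p G; have pS := pHall_pgroup sylS.
apply/negP=> p_deg; have p_G : (p %| #|G|)%N.
  have := dvd_irr1_cardG i; rewrite cfdeg_char ?irr_char // dvdC_nat.
  exact: dvdn_trans p_deg.
have ntS : S :!=: 1%g.
  by rewrite -cardG_gt1 (card_Hall sylS) p_part_gt1 mem_primes p_pr cardG_gt0.
have [_ p_S _] := pgroup_pdiv pS ntS.
have := coprime_dvdr p_S (coprime_sqr_eq1_mod (cfdeg_sqr_mod_Sylow sylS)).
by rewrite coprime_sym prime_coprime ?p_deg.
Qed.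

Lemma cfRes_multfree_normal (M : {group gT}) :
  M <| G -> (p %| #|M|)%N ->
  'Res[M] 'chi_i = \sum_(j in irr_constt ('Res[M] 'chi_i)) 'chi_j.
Proof.
move=> nMG /(Cauchy p_pr)[y My oy]; apply: (cfRes_irr_multfree nMG My).
exact: chi_order_p_norm1 (normal_sub nMG) My oy.
Qed.

Lemma center_p'group_nonlinear :
  ~~ ('chi_i \is a linear_char) -> p^'.-group 'Z(G).
Proof.
move=> nonlin; rewrite /pgroup p'natE //; apply: contraNN nonlin.
case/(Cauchy p_pr)=> y Zy oy; apply: (lin_char_center_norm1 Zy).
exact: chi_order_p_norm1 (center_sub G) Zy oy.
Qed.

Lemma cfnorm_Res_normal_p'Hall (M N P : {group gT}) :
  M \subset G -> N <| M -> p^'.-Hall(M) N -> p.-Sylow(M) P ->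
  '['Res[M] 'chi_i] = 1 + ('['Res[N] 'chi_i] - 1) / #|P|%:R.
Proof.
move=> sMG nNM hallN sylP; have sNM := normal_sub nNM.
have iMN : #|M : N| = #|P|.
  rewrite -divgS // (card_Hall hallN) (card_Hall sylP).
  by rewrite -{1}(partnC p (cardG_gt0 M)) mulnK.
rewrite -iMN; apply: (cfnorm_Res_index sMG sNM) => x /setDP[Mx Nx].
apply: chi_psing_norm1; first exact: (subsetP sMG).
by move: Nx; rewrite (mem_normal_Hall hallN nNM Mx) /p_elt p'natE // negbK.
Qed.

End PsingularNormOne.

Theorem lemma2p3 (p : nat) (gT : finGroupType) (G : {group gT}) (i : Iirr G) :
  prime p ->
  (forall x, x \in G -> (p %| #[x]%g)%N ->
     exists2 n : nat, (0 < n)%N & ('chi_i x) ^+ n = 1) ->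
  (* (a) *)
  (forall S : {group gT}, S \in 'Syl_p(G) ->
     [/\ (cfdeg 'chi_i ^ 2 = 1 %[mod #|S|])%N,
         odd p -> (cfdeg 'chi_i = 1 %[mod #|S|] \/ cfdeg 'chi_i + 1 = 0 %[mod #|S|])%N,
         forall a : nat, p = 2%N -> #|S| = (2 ^ a)%N -> (2 <= a)%N ->
           [\/ (cfdeg 'chi_i = 1 %[mod 2 ^ a])%N,
               (cfdeg 'chi_i + 1 = 0 %[mod 2 ^ a])%N,
               (cfdeg 'chi_i = 2 ^ a.-1 + 1 %[mod 2 ^ a])%N |
               (cfdeg 'chi_i + 1 = 2 ^ a.-1 %[mod 2 ^ a])%N]
       & ~~ (p %| cfdeg 'chi_i)%N])
  /\
  (* (b) *)
  ((forall M : {group gT}, M <| G -> (p %| #|M|)%N ->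
      'Res[M] 'chi_i = \sum_(j in irr_constt ('Res[M] 'chi_i)) 'chi_j)
   /\ (~~ ('chi_i \is a linear_char) -> cfaithful 'chi_i -> p^'.-group 'Z(G)))
  /\
  (* (c) *)
  (forall M N P : {group gT}, M \subset G -> N <| M -> p^'.-Hall(M) N ->
     P \in 'Syl_p(M) -> P :!=: 1%g ->
     '['Res[M] 'chi_i] = 1 + ('['Res[N] 'chi_i] - 1) / (#|P|%:R)).
Proof.
move=> p_pr chi_unity.
have chiN1 x : x \in G -> (p %| #[x])%N -> `|'chi_i x| = 1.
  by move=> Gx /(chi_unity x Gx)[n n_gt0 /(norm_expr_eq1 n_gt0)].
split; [|split; [split|]].
- move=> S; rewrite inE => sylS; have sqS := cfdeg_sqr_mod_Sylow chiN1 sylS.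
  split=> //; last exact: p_ndvd_cfdeg p_pr chiN1.
  + move=> p_odd; rewrite (card_pgroup (pHall_pgroup sylS)) in sqS *.
    exact: sqr_eq1_mod_odd_pfactor p_odd (cfdeg_irr_gt0 i) sqS.
  + by move=> [|[|b]] // _ Sb _; rewrite Sb in sqS *; apply: sqr_eq1_mod_pow2.
- exact: cfRes_multfree_normal p_pr chiN1.
- by move=> nonlin _; apply: center_p'group_nonlinear p_pr chiN1 _.
move=> M N P sMG nNM hallN; rewrite inE => sylP _.
by apply: (cfnorm_Res_normal_p'Hall p_pr chiN1 sMG nNM hallN).
Qed.
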